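(* For every $n\in\mathbb{N}_0$ and every $l\in\{0,\ldots,n\}$ the polynomials $A_n^l$ defined in the context satisfy $$\mathbf{x}\,A_{n}^{l}=\frac{1}{2(n+1)}\Big[(2n+3)\,A_{n+1}^{l}-(2l+1)\,\widehat{A_{n+1}^{l}}\Big]$$ and $$A_{n+1}^{l}=\frac{n+1}{2(n-l+1)(n+l+2)}\Big[(2n+3)\,\mathbf{x}\,A_{n}^{l}+(2l+1)\,\overline{\mathbf{x}}\,\widehat{A_{n}^{l}}\Big],$$ where products are quaternion products.
   Context: $\mathbb{H}$: real quaternions with basis $\mathbf{e}_0=1,\mathbf{e}_1,\mathbf{e}_2,\mathbf{e}_3$, $\mathbf{e}_i\mathbf{e}_j+\mathbf{e}_j\mathbf{e}_i=-2\delta_{ij}$ ($i,j=1,2,3$), $\mathbf{e}_1\mathbf{e}_2=\mathbf{e}_3$. A point $(x_0,x_1,x_2)\in\mathbb{R}^3$ is identified with $\mathbf{x}=x_0+x_1\mathbf{e}_1+x_2\mathbf{e}_2$, and $\overline{\mathbf{x}}=x_0-x_1\mathbf{e}_1-x_2\mathbf{e}_2$. For $g=\sum_{i=0}^3 g^i\mathbf{e}_i$ (real $g^i$) put $\widehat{g}:=g^0-g^1\mathbf{e}_1-g^2\mathbf{e}_2+g^3\mathbf{e}_3$. Spherical coordinates: $x_0=r\cos\theta$, $x_1=r\sin\theta\cos\varphi$, $x_2=r\sin\theta\sin\varphi$. Let $P_k$ be the Legendre polynomials and $P_k^m(t)=(1-t^2)^{m/2}\frac{d^m}{dt^m}P_k(t)$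 the associated Legendre functions (no Condon–Shortley phase; $P_k^m=0$ for $m>k$). For $n\in\mathbb{N}_0$, $0\le m\le n+1$ put $$\mathcal{A}^{m,n}(\theta)=\tfrac12\Big(\sin^2\theta\,\tfrac{d}{dt}[P_{n+1}^m(t)]_{t=\cos\theta}+(n+1)\cos\theta\,P_{n+1}^m(\cos\theta)\Big).$$ For $n\in\mathbb{N}_0$, $l=0,\ldots,n$ define $$A_n^l(\mathbf{x})=\frac{2^{l+1}n!\,r^n}{(n+l+2)!}\Big[(n+l+2)\mathcal{A}^{l,n}(\theta)\big(\cos l\varphi-\sin l\varphi\,\mathbf{e}_3\big)+\mathcal{A}^{l+1,n}(\theta)\big(\cos((l+1)\varphi)\,\mathbf{e}_1+\sin((l+1)\varphi)\,\mathbf{e}_2\big)\Big];$$ each $A_n^l$ is a homogeneous monogenic ($\bar\partial A_n^l=0$, $\bar\partial=\partial_{x_0}+\mathbf{e}_1\partial_{x_1}+\mathbf{e}_2\partial_{x_2}$ acting from the left) polynomial of degree $n$ in $x_0,x_1,x_2$ (e.g. $A_0^0=1$, $A_1^1=x_1-x_2\mathbf{e}_3$). *)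

From HB Require Import structures.
From mathcomp Require Import all_boot all_order all_algebra.
From mathcomp Require Import all_classical all_reals all_analysis.
Set Implicit Arguments. Unset Strict Implicit. Unset Printing Implicit Defensive.
Import Order.TTheory GRing.Theory Num.Theory.
Local Open Scope ring_scope.

Section Defs.
Variable R : realType.

(* Real quaternions g = g0 + g1 e1 + g2 e2 + g3 e3 *)
Record quat := Quat { q0 : R; q1 : R; q2 : R; q3 : R }.

Definition qadd (a b : quat) : quat :=
  Quat (q0 a + q0 b) (q1 a + q1 b) (q2 a + q2 b) (q3 a + q3 b).
Definition qscale (c : R) (a : quat) : quat :=
  Quat (c * q0 a) (c * q1 a) (c * q2 a) (c * q3 a).
Definition qsub (a b : quat) : quat := qadd a (qscale (-1) b).

(* Hamilton product: e_i e_i = -1, e1 e2 = e3 = - e2 e1, e2 e3 = e1, e3 e1 = e2 *)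
Definition qmul (a b : quat) : quat :=
  Quat (q0 a * q0 b - q1 a * q1 b - q2 a * q2 b - q3 a * q3 b)
       (q0 a * q1 b + q1 a * q0 b + q2 a * q3 b - q3 a * q2 b)
       (q0 a * q2 b - q1 a * q3 b + q2 a * q0 b + q3 a * q1 b)
       (q0 a * q3 b + q1 a * q2 b - q2 a * q1 b + q3 a * q0 b).

Definition qhat (g : quat) : quat := Quat (q0 g) (- q1 g) (- q2 g) (q3 g).

Definition paravec (x0 x1 x2 : R) : quat := Quat x0 x1 x2 0.
Definition parabar (x0 x1 x2 : R) : quat := Quat x0 (- x1) (- x2) 0.

Definition legendreP (k : nat) : {poly R} :=
  ((2 ^+ k * k`!%:R)^-1) *: ((('X ^+ 2 - 1) ^+ k)^`(k)).

(* associated Legendre functions (no Condon-Shortley phase), t in [-1,1]: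
   P_k^m(t) = (1 - t^2)^(m/2) d^m/dt^m P_k(t) *)
Definition assocLegendre (k m : nat) (t : R) : R :=
  Num.sqrt (1 - t ^+ 2) ^+ m * ((legendreP k)^`(m)).[t].

Definition Acal (m n : nat) (theta : R) : R :=
  2^-1 * (sin theta ^+ 2 * derive1 (assocLegendre n.+1 m) (cos theta)
          + n.+1%:R * cos theta * assocLegendre n.+1 m (cos theta)).

(* A_n^l at the point with spherical coordinates (r, theta, phi) *)
Definition Anl (n l : nat) (r theta phi : R) : quat :=
  qscale (2 ^+ l.+1 * n`!%:R * r ^+ n / (n + l + 2)`!%:R)
    (qadd
      (qscale ((n + l + 2)%:R * Acal l n theta)
              (Quat (cos (l%:R * phi)) 0 0 (- sin (l%:R * phi))))
      (qscale (Acal l.+1 n theta)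
              (Quat 0 (cos (l.+1%:R * phi)) (sin (l.+1%:R * phi)) 0))).

End Defs.

From HB Require Import structures.
From mathcomp Require Import all_boot all_order all_algebra.
From mathcomp Require Import all_classical all_reals all_analysis.
From mathcomp Require Import ring lra.
Set Implicit Arguments. Unset Strict Implicit. Unset Printing Implicit Defensive.
Import Order.TTheory GRing.Theory Num.Theory.
Local Open Scope ring_scope.

(* Write A_n^l = c_n (P A^{l,n} + A^{l+1,n} v) w with v = cos phi e1 + sin phi e2,
   w = cos (l phi) - sin (l phi) e3 and P = n + l + 2.  Since v^2 = -1, paravectors
   a + b v multiply like complex numbers; the hat fixes w and changes v into -v, and
   x = r (cos theta + sin theta v).  Both identities thus reduce to two scalar
   recurrences for the A^{m,n}: one in n alone, and one raising l and n together.
   Expressing A^{m,n}(theta) through derivatives of P_{n+1} at cos theta, these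
   follow from Legendre's equation and the relations between P_k and P_{k+1}, which
   are all read off Rodrigues' formula from (X^2 - 1) U' = 2k X U for U = (X^2 - 1)^k. *)

Lemma eq_lincomb1 {T : comPzRingType} {x y u v : T} (c : T) :
  u = v -> x - y = c * (u - v) -> x = y.
Proof. by move=> ->; rewrite subrr mulr0 => /eqP; rewrite subr_eq0 => /eqP. Qed.

Lemma eq_lincomb2 {T : comPzRingType} {x y u1 v1 u2 v2 : T} (c1 c2 : T) :
  u1 = v1 -> u2 = v2 -> x - y = c1 * (u1 - v1) + c2 * (u2 - v2) -> x = y.
Proof. by move=> -> ->; rewrite !subrr !mulr0 addr0 => /eqP; rewrite subr_eq0 => /eqP. Qed.

Arguments eq_lincomb1 {T x y u v} c.
Arguments eq_lincomb2 {T x y u1 v1 u2 v2} c1 c2.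

Lemma derivnSMX (T : comNzRingType) (p : {poly T}) m :
  ('X * p)^`(m.+1) = 'X * p^`(m.+1) + p^`(m) *+ m.+1.
Proof. by rewrite mulrC -[p * 'X]addr0 -polyC0 derivnMXaddC addrC mulrC. Qed.

Section Legendre.
Variable R : realType.
Implicit Types (p : {poly R}) (k m : nat).

Local Notation X2m1 := ('X ^+ 2 - 1 : {poly R}).

Lemma deriv_X2m1 : X2m1^`() = 'X *+ 2.
Proof. by rewrite derivB derivXn derivC subr0. Qed.

Lemma deriv_X2m1_expS k : (X2m1 ^+ k.+1)^`() = 'X * X2m1 ^+ k *+ (2 * k.+1).
Proof. by rewrite deriv_exp deriv_X2m1 -pred_Sn; ring. Qed.

Lemma X2m1_mul_deriv_exp k : X2m1 * (X2m1 ^+ k)^`() = 'X * X2m1 ^+ k *+ (2 * k).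
Proof.
case: k => [|k]; first by rewrite expr0 -polyC1 derivC mulr0 mulr0n.
by rewrite deriv_X2m1_expS [X2m1 ^+ k.+1]exprS; ring.
Qed.

Lemma X2m1_derivn_ode p k : X2m1 * p^`() = 'X * p *+ (2 * k) -> forall m,
  X2m1 * p^`(m.+2) + 'X * p^`(m.+1) *+ (2 * m.+1) + p^`(m) *+ (m.+1 * m)
  = 'X * p^`(m.+1) *+ (2 * k) + p^`(m) *+ (2 * k * m.+1).
Proof.
move=> ode; elim=> [|m IH].
  have := congr1 deriv ode; rewrite derivM deriv_X2m1 derivMn derivM derivX => e.
  rewrite derivn0 muln0 mulr0n addr0 !muln1 !derivnS derivn0.
  by apply: (eq_lincomb1 1 e); ring.
have := congr1 deriv IH; rewrite !(derivD, derivM, deriv_X2m1, derivMn, derivX) -!derivnS.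
by move=> e; apply: (eq_lincomb1 1 e); ring.
Qed.

Arguments X2m1_derivn_ode {p k}.

Definition rodrigues_coef k : R := (2 ^+ k * k`!%:R)^-1.

Lemma rodrigues_coefS k : rodrigues_coef k.+1 *+ (2 * k.+1) = rodrigues_coef k.
Proof.
rewrite /rodrigues_coef exprS factS -mulr_natr !natrM.
have h2 : (2 : R) ^+ k != 0 by rewrite expf_neq0 // pnatr_eq0.
have hf : (k`!%:R : R) != 0 by rewrite pnatr_eq0 -lt0n fact_gt0.
have hk : (1 + k%:R : R) != 0 by rewrite addrC natr1 pnatr_eq0.
by field; rewrite mul1r h2 hf hk.
Qed.

Lemma legendreP_derivnE k m :
  (legendreP R k)^`(m) = (rodrigues_coef k)%:P * (X2m1 ^+ k)^`(m + k).
Proof. by rewrite /legendreP derivnZ /derivn -iterD mul_polyC. Qed.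

Lemma legendreP_succ_derivnE k m : (legendreP R k.+1)^`(m) =
  (rodrigues_coef k)%:P * ('X * X2m1 ^+ k)^`(m + k).
Proof.
rewrite legendreP_derivnE addnS derivSn deriv_X2m1_expS derivnMn.
by rewrite -(rodrigues_coefS k) polyCMn; ring.
Qed.

Lemma legendreP_succ_derivnS k m : (legendreP R k.+1)^`(m.+1) =
  'X * (legendreP R k)^`(m.+1) + (legendreP R k)^`(m) *+ (k.+1 + m).
Proof. by rewrite legendreP_succ_derivnE addSn derivnSMX !legendreP_derivnE addSn; ring. Qed.

Lemma legendreP_derivn_ode k m :
  X2m1 * (legendreP R k)^`(m.+2) + 'X * (legendreP R k)^`(m.+1) *+ (2 * m.+1)
    + (legendreP R k)^`(m) *+ (m * m.+1)
  = (legendreP R k)^`(m) *+ (k * k.+1).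
Proof.
have e := X2m1_derivn_ode (X2m1_mul_deriv_exp k) (m + k).
rewrite !legendreP_derivnE !addSn.
by apply: (eq_lincomb1 (rodrigues_coef k)%:P e); ring.
Qed.

Lemma legendreP_succ_derivn k m :
  (legendreP R k.+1)^`(m) *+ k.+1 - (legendreP R k.+1)^`(m) *+ m
  = 'X * (legendreP R k)^`(m) *+ (k.+1 + m) + X2m1 * (legendreP R k)^`(m.+1).
Proof.
case: m => [|m].
  case: k => [|k].
    rewrite legendreP_succ_derivnE !legendreP_derivnE !expr0 !derivn0 derivn1 -polyC1 derivC.
    by ring.
  have e := X2m1_derivn_ode (X2m1_mul_deriv_exp k.+1) k.
  rewrite legendreP_succ_derivnE add0n derivnSMX !legendreP_derivnE.
  by apply: (eq_lincomb1 (- (rodrigues_coef k.+1)%:P) e); ring.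
have e := X2m1_derivn_ode (X2m1_mul_deriv_exp k) (m + k).
rewrite legendreP_succ_derivnE addSn derivnSMX !legendreP_derivnE !addSn.
by apply: (eq_lincomb1 (- (rodrigues_coef k)%:P) e); ring.
Qed.

End Legendre.

Section AssociatedLegendre.
Variable R : realType.
Implicit Types (k l m n : nat) (theta : R).

Lemma sin2_derive1_assocLegendre k m theta : 0 <= theta <= pi ->
  sin theta ^+ 2 * derive1 (assocLegendre k m) (cos theta)
  = sin theta ^+ m * (- m%:R * cos theta * ((legendreP R k)^`(m)).[cos theta]
                      + (1 - cos theta ^+ 2) * ((legendreP R k)^`(m.+1)).[cos theta]).
Proof.
move=> theta_pi; have s_ge0 : 0 <= sin theta by exact: sin_ge0_pi.
have [s0|s_neq0] := eqVneq (sin theta) 0.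
  rewrite -sin2cos2 s0 !expr0n /= mul0r; case: m => [|m] /=; last by rewrite mul0r.
  by rewrite mulr0n oppr0 !mul0r mul1r addr0.
set t := cos theta; set q : {poly R} := 1 - 'X ^+ 2.
have qt : q.[t] = sin theta ^+ 2 by rewrite /q !hornerE sin2cos2.
have sqrt_qt : Num.sqrt q.[t] = sin theta by rewrite qt sqrtr_sqr ger0_norm.
have q_gt0 : 0 < q.[t] by rewrite qt exprn_gt0 // lt_neqAle eq_sym s_neq0.
have dq : q^`().[t] = - (2 * t) by rewrite /q derivB derivC derivXn !hornerE; ring.
have -> : assocLegendre k m
    = (Num.sqrt \o horner q) ^+ m * horner ((legendreP R k)^`(m)).
  by apply/funext => u; rewrite /assocLegendre !fctE /q !hornerE.
have d_sqrt := is_derive1_comp (is_derive1_sqrt q_gt0) (is_derive_poly q t).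
have d_pow := @is_deriveX _ _ _ m t 1 _ d_sqrt.
have d_prod := is_deriveM d_pow (is_derive_poly ((legendreP R k)^`(m)) t).
rewrite derive1E derive_val !fctE /= sqrt_qt dq -derivnS /t; clear d_prod d_pow.
have scaleE (a b : R) : a *: b = a * b by [].
rewrite !scaleE -sin2cos2; case: m => [|m] /=; first by rewrite mulr0n; ring.
by rewrite [sin theta ^+ m.+1]exprS; field.
Qed.

(* [hornerMn] comes first: otherwise [hornerD] fires on the unfolded sum [p *+ k]. *)
Local Definition hornerE_natmul :=
  (hornerMn, hornerXn, hornerX, hornerC, hornerN, hornerD, hornerM).

Lemma Acal_legendreP m n theta : 0 <= theta <= pi ->
  Acal m n theta = sin theta ^+ m / 2 *
    ((n.+1%:R - m%:R) * cos theta * ((legendreP R n.+1)^`(m)).[cos theta]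
     + (1 - cos theta ^+ 2) * ((legendreP R n.+1)^`(m.+1)).[cos theta]).
Proof.
move=> theta_pi; have s_ge0 := sin_ge0_pi theta_pi.
have sqrt_sin : Num.sqrt (1 - cos theta ^+ 2) = sin theta.
  by rewrite -sin2cos2 sqrtr_sqr ger0_norm.
by rewrite /Acal sin2_derive1_assocLegendre // /assocLegendre sqrt_sin; ring.
Qed.

Lemma Acal_succ_deg l n theta : 0 <= theta <= pi ->
  (n.+1%:R - l%:R) * Acal l n.+1 theta
  = (n + l + 2)%:R * cos theta * Acal l n theta - sin theta * Acal l.+1 n theta.
Proof.
move=> theta_pi; rewrite !Acal_legendreP //.
set t := cos theta; set s := sin theta.
have sin_sq (y : R) : s * (s * s ^+ l / 2 * y) = (1 - t ^+ 2) * (s ^+ l / 2 * y).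
  by rewrite /s /t -sin2cos2; ring.
have := congr1 (horner^~ t) (legendreP_succ_derivn R n.+1 l); rewrite !hornerE_natmul => rec.
have := congr1 (horner^~ t) (legendreP_derivn_ode R n.+1 l); rewrite !hornerE_natmul => ode.
rewrite legendreP_succ_derivnS !hornerE_natmul [s ^+ l.+1]exprS sin_sq.
by apply: (eq_lincomb2 ((n.+1%:R - l%:R) * s ^+ l / 2 * t) ((t ^+ 2 - 1) * s ^+ l / 2) rec ode);
  ring.
Qed.

Lemma Acal_succ_deg_ord l n theta : 0 <= theta <= pi ->
  (n + l + 2)%:R * Acal l.+1 n.+1 theta
  = (n + l + 3)%:R * ((n + l + 2)%:R * sin theta * Acal l n theta + cos theta * Acal l.+1 n theta).
Proof.
move=> theta_pi; rewrite !Acal_legendreP //.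
set t := cos theta; set s := sin theta.
have := congr1 (horner^~ t) (legendreP_derivn_ode R n.+1 l); rewrite !hornerE_natmul => ode.
rewrite !(legendreP_succ_derivnS R n.+1) !hornerE_natmul [s ^+ l.+1]exprS.
by apply: (eq_lincomb1 (s * s ^+ l * t / 2) ode); ring.
Qed.
End AssociatedLegendre.

Section Quaternion.
Variable R : realType.
Implicit Types (p q w : quat R) (k : R).

Lemma quatP p q : q0 p = q0 q -> q1 p = q1 q -> q2 p = q2 q -> q3 p = q3 q -> p = q.
Proof. by case: p q => ? ? ? ? [? ? ? ?] /= -> -> -> ->. Qed.

Lemma qmulA p q w : qmul (qmul p q) w = qmul p (qmul q w).
Proof. by apply: quatP => /=; ring. Qed.

Lemma qmulZr k p q : qmul p (qscale k q) = qscale k (qmul p q).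
Proof. by apply: quatP => /=; ring. Qed.

Lemma qhatZ k p : qhat (qscale k p) = qscale k (qhat p).
Proof. by apply: quatP => /=; ring. Qed.

Lemma qhatM p q : qhat (qmul p q) = qmul (qhat p) (qhat q).
Proof. by apply: quatP => /=; ring. Qed.

(* [qline c s a b] is the paravector a + b (c e1 + s e2). *)
Definition qline (c s a b : R) : quat R := Quat a (b * c) (b * s) 0.

Lemma qhat_qline c s a b : qhat (qline c s a b) = qline c s a (- b).
Proof. by apply: quatP => /=; ring. Qed.

(* For c^2 + s^2 = 1 the unit c e1 + s e2 squares to -1, so paravectors along it
   multiply like complex numbers. *)
Lemma qmul_qline c s a b a' b' : c ^+ 2 + s ^+ 2 = 1 ->
  qmul (qline c s a b) (qline c s a' b') = qline c s (a * a' - b * b') (a * b' + b * a').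
Proof.
move=> cs; apply: quatP => /=; try ring.
by rewrite -[b * b']mulr1 -cs; ring.
Qed.

End Quaternion.

Lemma qline_recurrences (R : realType) (c s C S : R) (n l : nat) (k r t u A0 A1 B0 B1 : R) :
  c ^+ 2 + s ^+ 2 = 1 -> (l <= n)%N ->
  (n.+1%:R - l%:R) * B0 = (n + l + 2)%:R * t * A0 - u * A1 ->
  (n + l + 2)%:R * B1 = (n + l + 3)%:R * ((n + l + 2)%:R * u * A0 + t * A1) ->
  let w := Quat C 0 0 S in
  let A := qscale k (qmul (qline c s ((n + l + 2)%:R * A0) A1) w) in
  let B := qscale (k * (n.+1%:R * r / (n + l + 3)%:R))
                  (qmul (qline c s ((n.+1 + l + 2)%:R * B0) B1) w) in
  qmul (qline c s (r * t) (r * u)) A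
    = qscale (2 * n.+1%:R)^-1
        (qsub (qscale (2 * n + 3)%:R B) (qscale (2 * l + 1)%:R (qhat B)))
  /\
  B = qscale (n.+1%:R / (2 * (n - l + 1)%:R * (n + l + 2)%:R))
        (qadd (qscale (2 * n + 3)%:R (qmul (qline c s (r * t) (r * u)) A))
              (qscale (2 * l + 1)%:R (qmul (qline c s (r * t) (- (r * u))) (qhat A)))).
Proof.
move=> cs le_ln R1 R2 w A B.
have l_ge0 : (0 : R) <= l%:R by rewrite ler0n.
have l_le_n : (l%:R : R) <= n%:R by rewrite ler_nat.
have d1 : (n.+1%:R - l%:R : R) != 0 by apply/negbT/gt_eqF; rewrite -natr1; lra.
have d2 : ((n + l + 2)%:R : R) != 0 by rewrite pnatr_eq0 addn2.
have B0E : B0 = ((n + l + 2)%:R * t * A0 - u * A1) / (n.+1%:R - l%:R).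
  by rewrite -R1 mulrC mulKf.
have B1E : B1 = (n + l + 3)%:R * ((n + l + 2)%:R * u * A0 + t * A1) / (n + l + 2)%:R.
  by rewrite -R2 mulrC mulKf.
have hat_w : qhat w = w by apply: quatP; rewrite /= ?oppr0.
have mul_x p a b : qmul (qline c s (r * t) p) (qscale k (qmul (qline c s a b) w))
    = qscale k (qmul (qline c s (r * t * a - p * b) (r * t * b + p * a)) w).
  by rewrite qmulZr -qmulA qmul_qline.
rewrite /A /B !qhatZ !qhatM !qhat_qline hat_w !mul_x (natrD _ (n - l)) natrB //.
rewrite B0E B1E; split; apply: quatP => /=; field;
  by do ?[apply/andP; split]; apply: lt0r_neq0; lra.
Qed.

Section Anl.
Variable R : realType.
Implicit Types (n l : nat) (r theta phi : R).

Definition Anl_coef n l r : R := 2 ^+ l.+1 * n`!%:R * r ^+ n / (n + l + 2)`!%:R.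

Lemma Anl_coefS n l r :
  Anl_coef n.+1 l r = Anl_coef n l r * (n.+1%:R * r / (n + l + 3)%:R).
Proof.
have f_neq0 : ((n + l + 2)`!%:R : R) != 0 by rewrite pnatr_eq0 -lt0n fact_gt0.
have d_neq0 : (n%:R + l%:R + 3 : R) != 0 by rewrite -!natrD pnatr_eq0 addn3.
rewrite /Anl_coef (_ : n.+1 + l + 2 = (n + l + 2).+1)%N ?addSn //.
rewrite !factS [r ^+ n.+1]exprS !natrM -addnS.
by field; rewrite d_neq0 f_neq0.
Qed.

(* (cos phi e1 + sin phi e2) (cos (l phi) - sin (l phi) e3) = cos ((l+1) phi) e1 + sin ((l+1) phi) e2 *)
Lemma Anl_qline n l r theta phi : Anl n l r theta phi =
  qscale (Anl_coef n l r)
    (qmul (qline (cos phi) (sin phi) ((n + l + 2)%:R * Acal l n theta) (Acal l.+1 n theta))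
          (Quat (cos (l%:R * phi)) 0 0 (- sin (l%:R * phi)))).
Proof.
rewrite /Anl /Anl_coef -[l.+1%:R]natr1 mulrDl mul1r cosD sinD.
by congr qscale; apply: quatP => /=; ring.
Qed.

End Anl.

Theorem mainTheorem2 (R : realType) (n l : nat) (r theta phi : R) :
  (l <= n)%N -> 0 <= r -> 0 <= theta <= pi ->
  let x0 := r * cos theta in
  let x1 := r * sin theta * cos phi in
  let x2 := r * sin theta * sin phi in
  qmul (paravec x0 x1 x2) (Anl n l r theta phi)
    = qscale (2 * n.+1%:R)^-1
        (qsub (qscale (2 * n + 3)%:R (Anl n.+1 l r theta phi))
              (qscale (2 * l + 1)%:R (qhat (Anl n.+1 l r theta phi))))
  /\
  Anl n.+1 l r theta phi
    = qscale (n.+1%:R / (2 * (n - l + 1)%:R * (n + l + 2)%:R))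
        (qadd (qscale (2 * n + 3)%:R
                 (qmul (paravec x0 x1 x2) (Anl n l r theta phi)))
              (qscale (2 * l + 1)%:R
                 (qmul (parabar x0 x1 x2) (qhat (Anl n l r theta phi))))).
Proof.
move=> le_ln _ theta_pi x0 x1 x2.
have -> : paravec x0 x1 x2 = qline (cos phi) (sin phi) (r * cos theta) (r * sin theta) by [].
have -> : parabar x0 x1 x2 = qline (cos phi) (sin phi) (r * cos theta) (- (r * sin theta)).
  by rewrite /parabar /qline !mulNr.
rewrite !Anl_qline Anl_coefS.
apply: qline_recurrences => //; first exact: cos2Dsin2.
- exact: Acal_succ_deg.
- exact: Acal_succ_deg_ord.
Qed.
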